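(* Let $S$ be a set of $n$ points in $\mathbb{R}^d$, where $d$ is a constant, with Euclidean distance; let $\varepsilon>0$ be a real constant, let $\theta$ be a constant with $0<\theta<\pi/4$ such that $1/(\cos\theta-\sin\theta)\le 1+\varepsilon$, let $\mathcal{C}$ be a cone collection as in the context consisting of $O(1/\theta^{d-1})$ cones, and let $f\ge0$ be an integer. Then each of the graphs $\mathrm{Yao}(\theta,2f+1)$ and $\Theta(\theta,2f+1)$ is an $f$-faulty-degree $(1+\varepsilon)$-spanner for $S$ with $O(fn)$ edges.
   Context: $K_S$ is the complete graph on $S$ with edge weights the Euclidean distances; all graphs have Euclidean edge weights; $\delta_X$ is shortest-path distance in $X$; $X\setminus F$ is $X$ with the edges of $F$ removed. A graph $G=(S,E)$ is an $f$-faulty-degree $t$-spanner for $S$ if for every $F\subseteq E$ with $(S,F)$ of maximum degree at most $f$ and all $p,q\in S$, $\delta_{G\setminus F}(p,q)\le t\,\delta_{K_S\setminus F}(p,q)$. $\mathcal{C}$ is a finite collection of cones with apex at the origin covering $\mathbb{R}^d$, each of angular diameter at most $\theta$, i.e. $\max\{\angle(0x,0y):x,y\in C\setminus\{0\}\}\le\theta$. For each $C\in\mathcal{C}$ fix a ray $\ell_C$ from the origin contained in $C$. For $p\in S$: $C+p=\{x+p:x\in C\}$, $\ell_C+p$ is the translate of $\ell_C$ emanating from $p$, and $S_{p,C}=(C+p)\cap(S\setminus\{p\})$. The graph $\mathrm{Yao}(\theta,k)$ has vertex set $S$ and, for each $p\in S$ and $C\in\mathcal{C}$, an edge from $p$ to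 each of the $\min(k,|S_{p,C}|)$ points of $S_{p,C}$ closest to $p$ in Euclidean distance (ties broken arbitrarily). The graph $\Theta(\theta,k)$ has vertex set $S$ and, for each $p\in S$ and $C\in\mathcal{C}$, an edge from $p$ to each of $\min(k,|S_{p,C}|)$ points of $S_{p,C}$ whose orthogonal projections onto $\ell_C+p$ are closest to $p$ (ties broken arbitrarily). *)

From HB Require Import structures.
From mathcomp Require Import all_boot all_order all_algebra.
From mathcomp Require Import all_classical all_reals all_analysis.
Set Implicit Arguments. Unset Strict Implicit. Unset Printing Implicit Defensive.
Import Order.TTheory GRing.Theory Num.Theory.
Local Open Scope classical_set_scope.
Local Open Scope ring_scope.

Section Defs.
Variable R : realType.
Variable d : nat.

Definition dotv (u v : 'rV[R]_d) : R := \sum_(i < d) u ord0 i * v ord0 i.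
Definition enorm (u : 'rV[R]_d) : R := Num.sqrt (dotv u u).

Definition vangle (u v : 'rV[R]_d) : R := acos (dotv u v / (enorm u * enorm v)).

(* A finite collection of m cones C_c with apex 0, covering R^d, each of angular
   diameter at most theta, with a fixed ray l_c = {t *: ray c | t >= 0} inside C_c. *)
Definition cone_collection (theta : R) (m : nat)
  (cone : 'I_m -> set 'rV[R]_d) (ray : 'I_m -> 'rV[R]_d) : Prop :=
  (forall c x t, cone c x -> 0 < t -> cone c (t *: x)) /\
  (forall c x y, cone c x -> cone c y -> x != 0 -> y != 0 -> vangle x y <= theta) /\
  (forall x, exists c, cone c x) /\
  (forall c, ray c != 0 /\ forall t, 0 <= t -> cone c (t *: ray c)).

Variable n : nat.
Variable pt : 'I_n -> 'rV[R]_d.   (* S = the image of the injective map pt *)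

Definition edist (i j : 'I_n) : R := enorm (pt i - pt j).

(* S_{p,C} = (C + p) ∩ (S \ {p}) *)
Definition Spc (C : set 'rV[R]_d) (i : 'I_n) : {set 'I_n} :=
  [set j | (j != i) && `[< C (pt j - pt i) >]].

(* distance from pt i to the orthogonal projection of pt j onto the line of ray u from pt i *)
Definition projdist (u : 'rV[R]_d) (i j : 'I_n) : R :=
  `|dotv (pt j - pt i) u| / enorm u.

(* Graphs on S: symmetric relations on the vertex indices.
   Yao(theta,k): for some admissible tie-breaking N. *)
Definition is_Yao m (cone : 'I_m -> set 'rV[R]_d) (k : nat) (G : rel 'I_n) : Prop :=
  exists N : 'I_n -> 'I_m -> {set 'I_n},
    (forall i c, N i c \subset Spc (cone c) i) /\
    (forall i c, #|N i c| = minn k #|Spc (cone c) i|) /\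
    (forall i c j j', j \in N i c -> j' \in Spc (cone c) i :\: N i c ->
        edist i j <= edist i j') /\
    (forall i j, G i j = [exists c, (j \in N i c) || (i \in N j c)]).

Definition is_Theta m (cone : 'I_m -> set 'rV[R]_d) (ray : 'I_m -> 'rV[R]_d)
    (k : nat) (G : rel 'I_n) : Prop :=
  exists N : 'I_n -> 'I_m -> {set 'I_n},
    (forall i c, N i c \subset Spc (cone c) i) /\
    (forall i c, #|N i c| = minn k #|Spc (cone c) i|) /\
    (forall i c j j', j \in N i c -> j' \in Spc (cone c) i :\: N i c ->
        projdist (ray c) i j <= projdist (ray c) i j') /\
    (forall i j, G i j = [exists c, (j \in N i c) || (i \in N j c)]).

Definition walk_len (i : 'I_n) (s : seq 'I_n) : R := \sum_(x <- pairmap edist i s) x.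

(* shortest-path distance in the graph with edge relation E (+oo if no path) *)
Definition spdist (E : rel 'I_n) (i j : 'I_n) : \bar R :=
  ereal_inf [set (walk_len i s)%:E | s in [set s | path E i s && (last i s == j)]].

Definition KminusF (F : rel 'I_n) : rel 'I_n := fun i j => (i != j) && ~~ F i j.
Definition GminusF (G F : rel 'I_n) : rel 'I_n := fun i j => G i j && ~~ F i j.

Definition faulty_degree_spanner (f : nat) (t : R) (G : rel 'I_n) : Prop :=
  forall F : rel 'I_n,
    symmetric F -> subrel F G -> (forall i, #|[set j | F i j]| <= f)%N ->
    forall i j, (spdist (GminusF G F) i j <= t%:E * spdist (KminusF F) i j)%E.

Definition nedges (G : rel 'I_n) : nat :=
  #|[set e : 'I_n * 'I_n | (e.1 < e.2)%N && G e.1 e.2]|.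

End Defs.

From Pilot Require Import Defs.
From HB Require Import structures.
From mathcomp Require Import all_boot all_order all_algebra.
From mathcomp Require Import all_classical all_reals all_analysis.
From mathcomp Require Import ring lra zify.
Import Order.TTheory GRing.Theory Num.Theory.
Set Implicit Arguments. Unset Strict Implicit.
Local Open Scope ring_scope.

(* Let [pq] be an edge of [K_S \ F] and [c] the cone containing [q - p].  If
   [p] did not select [q] in [c], then [p] selected [2f+1] points of [c] that
   are (up to a factor [cos theta]) at least as close to [p] as [q]; the at
   most [2f] faulty edges at [p] and at [q] leave one such [r] with [pr] and
   [rq] both intact.  Since the angle [qpr] is at most [theta],
   [|rq| <= |pq| - (cos theta - sin theta) |pr| < |pq|], so by induction on
   [|pq|] there is a walk [p, r, ..., q] in [G \ F] of length at most
   [|pr| + t |rq| <= t |pq|] whenever [t (cos theta - sin theta) >= 1].  The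
   edge bound holds because every point selects at most [2f+1] points per cone. *)

Section Euclidean.
Variables (R : realType) (d : nat).
Implicit Types (u v w : 'rV[R]_d) (a b : R).

Lemma dotvC u v : dotv u v = dotv v u.
Proof. by apply: eq_bigr => i _; rewrite mulrC. Qed.

Lemma dotvDl u v w : dotv (u + v) w = dotv u w + dotv v w.
Proof. by rewrite /dotv -big_split; apply: eq_bigr => i _; rewrite mxE mulrDl. Qed.

Lemma dotvZl a u w : dotv (a *: u) w = a * dotv u w.
Proof. by rewrite /dotv mulr_sumr; apply: eq_bigr => i _; rewrite mxE mulrA. Qed.

Lemma dotvNl u w : dotv (- u) w = - dotv u w.
Proof. by rewrite -scaleN1r dotvZl mulN1r. Qed.

Lemma dotv0l u : dotv 0 u = 0.
Proof. by rewrite -(scale0r (0 : 'rV[R]_d)) dotvZl mul0r. Qed.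

Lemma dotvDr u v w : dotv w (u + v) = dotv w u + dotv w v.
Proof. by rewrite dotvC dotvDl !(dotvC w). Qed.

Lemma dotvZr a u w : dotv w (a *: u) = a * dotv w u.
Proof. by rewrite dotvC dotvZl dotvC. Qed.

Lemma dotvNr u w : dotv w (- u) = - dotv w u.
Proof. by rewrite dotvC dotvNl dotvC. Qed.

Lemma dotvv_ge0 u : 0 <= dotv u u.
Proof. by apply: sumr_ge0 => i _; rewrite -expr2 sqr_ge0. Qed.

Lemma dotvv_eq0 u : dotv u u = 0 -> u = 0.
Proof.
move=> /eqP; rewrite psumr_eq0 => [/allP uu0|i _]; last by rewrite -expr2 sqr_ge0.
apply/rowP => i; rewrite mxE.
by move: (uu0 i (mem_index_enum _)); rewrite -expr2 sqrf_eq0 => /eqP.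
Qed.

Lemma enorm_ge0 u : 0 <= enorm u.
Proof. exact: sqrtr_ge0. Qed.

Lemma enorm_sqr u : enorm u ^+ 2 = dotv u u.
Proof. by rewrite /enorm sqr_sqrtr // dotvv_ge0. Qed.

Lemma enorm_gt0 u : u != 0 -> 0 < enorm u.
Proof.
move=> u0; rewrite lt_neqAle enorm_ge0 andbT; apply/eqP => nu0.
by move: u0; rewrite (dotvv_eq0 (u := u)) ?eqxx // -enorm_sqr -nu0 expr0n.
Qed.

Lemma enormN u : enorm (- u) = enorm u.
Proof. by rewrite /enorm dotvNl dotvNr opprK. Qed.

Lemma dotv_comb2 a b u v :
  dotv (a *: u + b *: v) (a *: u + b *: v) =
  a ^+ 2 * enorm u ^+ 2 + 2 * a * b * dotv u v + b ^+ 2 * enorm v ^+ 2.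
Proof. rewrite !enorm_sqr dotvDl !dotvDr !dotvZl !dotvZr (dotvC v u); ring. Qed.

Lemma cauchy_schwarz u v : `|dotv u v| <= enorm u * enorm v.
Proof.
have [->|u0] := eqVneq u 0; first by rewrite dotv0l normr0 mulr_ge0 ?enorm_ge0.
have [->|v0] := eqVneq v 0.
  by rewrite dotvC dotv0l normr0 mulr_ge0 ?enorm_ge0.
have uv_gt0 : 0 < enorm u * enorm v by rewrite mulr_gt0 ?enorm_gt0.
have := dotvv_ge0 (enorm v *: u + (- enorm u) *: v).
have := dotvv_ge0 (enorm v *: u + enorm u *: v).
rewrite !dotv_comb2 ler_norml => *; apply/andP; split; nra.
Qed.

Lemma cos_le_dotv theta u v : 0 <= theta <= pi -> u != 0 -> v != 0 ->
  vangle u v <= theta -> cos theta * (enorm u * enorm v) <= dotv u v.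
Proof.
move=> /andP[theta_ge0 theta_le] u0 v0 uv_theta.
have uv_gt0 : 0 < enorm u * enorm v by rewrite mulr_gt0 ?enorm_gt0.
rewrite -ler_pdivlMr //; set z := _ / _ in uv_theta *.
have z_in : -1 <= z <= 1.
  have := cauchy_schwarz u v; rewrite ler_norml => /andP[? ?].
  by rewrite /z ler_pdivlMr // ler_pdivrMr //; apply/andP; split; lra.
have [/andP[acos_ge0 acos_le] cos_acos] := acos_def z_in.
rewrite -cos_acos leNgt; apply/negP => cos_lt.
have acos_in : acos z \in `[0, pi] by rewrite in_itv /= acos_ge0.
have theta_in : theta \in `[0, pi] by rewrite in_itv /= theta_ge0.
move: cos_lt; rewrite (ltr_cos theta_in acos_in); move: uv_theta; rewrite /vangle.
lra.
Qed.

End Euclidean.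

Section Trigonometry.
Variable R : realType.
Implicit Type theta : R.

Lemma quarter_pi_in_0pi theta : 0 < theta -> theta < pi / 4 -> 0 <= theta <= pi.
Proof.
move=> theta_gt0 theta_lt; have := pi_gt0 R => pi_gt0.
by rewrite ltW //=; lra.
Qed.

Lemma sin_lt_cos_quarter_pi theta : 0 < theta -> theta < pi / 4 ->
  0 < sin theta < cos theta.
Proof.
move=> theta_gt0 theta_lt; have := pi_gt0 R => pi_gt0.
have sin_gt0 : 0 < sin theta.
  by apply: sin_gt0_pihalf; apply/andP; split=> //; lra.
have cos_gt0 : 0 < cos theta.
  by apply: cos_gt0_pihalf; apply/andP; split; lra.
have : 0 < cos (theta *+ 2).
  by apply: cos_gt0_pihalf; rewrite -mulr_natr; apply/andP; split; lra.
rewrite cos_mulr2n mulr2n sin_gt0 /= => cos2_gt0.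
have := cos2Dsin2 theta; nra.
Qed.

Lemma enorm_sub_narrow theta d (u v : 'rV[R]_d) : 0 < theta -> theta < pi / 4 ->
  cos theta * (enorm u * enorm v) <= dotv u v -> enorm v * cos theta <= enorm u ->
  enorm (u - v) <= enorm u - (cos theta - sin theta) * enorm v.
Proof.
move=> theta_gt0 theta_lt uv_cos v_near.
have /andP[sin_gt0 sin_lt_cos] := sin_lt_cos_quarter_pi theta_gt0 theta_lt.
have := cos_le1 theta; have := cos2Dsin2 theta.
have := enorm_ge0 u; have := enorm_ge0 v; have := enorm_ge0 (u - v).
have := enorm_sqr (u - v).
rewrite -[u - v]/(u + - v) -scaleN1r -[u in u + _]scale1r dotv_comb2.
rewrite scale1r scaleN1r.
set a := enorm u in v_near uv_cos *; set b := enorm v in v_near uv_cos *.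
set w := enorm (u - v); move=> w_sqr w_ge0 b_ge0 a_ge0 cs1 cos_le1.
(* With [c^2 + s^2 = 1]: [(a - (c - s) b)^2 - (a^2 - 2 c a b + b^2) = 2 s b (a - c b)]. *)
have : 0 <= sin theta * b * (a - cos theta * b).
  by rewrite !mulr_ge0 ?subr_ge0 ?(ltW sin_gt0) // mulrC.
have : 0 <= a - (cos theta - sin theta) * b by nra.
nra.
Qed.

End Trigonometry.

Section Walks.
Variables (R : realType) (d n : nat) (pt : 'I_n -> 'rV[R]_d).
Local Notation dist := (Defs.edist pt).
Local Notation walk_len := (walk_len pt).

Lemma edist_ge0 i j : 0 <= dist i j.
Proof. exact: enorm_ge0. Qed.

Lemma edistE i j : dist i j = enorm (pt j - pt i).
Proof. by rewrite /Defs.edist -enormN opprB. Qed.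

Lemma walk_len_nil i : walk_len i [::] = 0.
Proof. by rewrite /Defs.walk_len big_nil. Qed.

Lemma walk_len_cons i x s : walk_len i (x :: s) = dist i x + walk_len x s.
Proof. by rewrite /Defs.walk_len /= big_cons. Qed.

Lemma walk_len_cat i s1 s2 :
  walk_len i (s1 ++ s2) = walk_len i s1 + walk_len (last i s1) s2.
Proof. by rewrite /Defs.walk_len pairmap_cat big_cat. Qed.

Definition walk_within (E : rel 'I_n) i j (L : R) : Prop :=
  exists2 s, path E i s && (last i s == j) & walk_len i s <= L.

Lemma walk_within_le E i j L L' :
  walk_within E i j L -> L <= L' -> walk_within E i j L'.
Proof. by move=> [s Es sL] LL'; exists s => //; apply: le_trans LL'. Qed.

Lemma walk_within_refl E i : walk_within E i i 0.
Proof. by exists [::]; rewrite ?walk_len_nil /= ?eqxx. Qed.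

Lemma walk_within_edge (E : rel 'I_n) i j : E i j -> walk_within E i j (dist i j).
Proof.
by move=> Eij; exists [:: j]; rewrite ?walk_len_cons ?walk_len_nil ?addr0 /= ?Eij ?eqxx.
Qed.

Lemma walk_within_cat E i j k L L' :
  walk_within E i j L -> walk_within E j k L' -> walk_within E i k (L + L').
Proof.
move=> [s1 /andP[Es1 /eqP s1j] s1L] [s2 /andP[Es2 /eqP s2k] s2L].
exists (s1 ++ s2); first by rewrite cat_path last_cat s1j Es1 Es2 s2k eqxx.
by rewrite walk_len_cat s1j lerD.
Qed.

Lemma spdist_le_walk_within E i j L :
  walk_within E i j L -> (spdist pt E i j <= L%:E)%E.
Proof.
move=> [s Es sL]; apply: ge_ereal_inf; exists (walk_len i s)%:E; first by exists s.
by rewrite lee_fin.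
Qed.

End Walks.

Section Projection.
Variables (R : realType) (d n : nat) (pt : 'I_n -> 'rV[R]_d).
Local Notation dist := (Defs.edist pt).

Lemma projdist_le_edist u p q : u != 0 -> projdist pt u p q <= dist p q.
Proof.
by move=> u0; rewrite /projdist edistE ler_pdivrMr ?enorm_gt0 // cauchy_schwarz.
Qed.

Lemma edist_cos_le_projdist theta u p q : 0 <= theta <= pi -> u != 0 ->
  pt q - pt p != 0 -> vangle (pt q - pt p) u <= theta ->
  dist p q * cos theta <= projdist pt u p q.
Proof.
move=> theta_in u0 qp0 angle; rewrite /projdist edistE ler_pdivlMr ?enorm_gt0 //.
by rewrite mulrAC mulrC; apply: le_trans (cos_le_dotv theta_in qp0 u0 angle) _; apply: ler_norm.
Qed.

End Projection.

Section FaultTolerance.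
Variables (R : realType) (d n m : nat) (pt : 'I_n -> 'rV[R]_d).
Variables (cone : 'I_m -> set 'rV[R]_d) (theta : R) (f : nat).
Variables (N : 'I_n -> 'I_m -> {set 'I_n}) (G : rel 'I_n).
Local Notation dist := (Defs.edist pt).
Local Notation Spc c := (Spc pt (cone c)).

Hypothesis pt_inj : injective pt.
Hypotheses (theta_gt0 : 0 < theta) (theta_lt : theta < pi / 4).
Hypothesis cone_narrow : forall c x y, cone c x -> cone c y -> x != 0 -> y != 0 ->
  vangle x y <= theta.
Hypothesis cone_cover : forall x, exists c, cone c x.
Hypothesis N_sub : forall i c, N i c \subset Spc c i.
Hypothesis card_N : forall i c, #|N i c| = minn (2 * f + 1) #|Spc c i|.
Hypothesis N_near : forall p c r q, r \in N p c -> q \in Spc c p :\: N p c ->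
  dist p r * cos theta <= dist p q.
Hypothesis G_N : forall i j, G i j = [exists c, (j \in N i c) || (i \in N j c)].

Lemma Spc_cone c p q : q \in Spc c p -> pt q - pt p != 0 /\ cone c (pt q - pt p).
Proof.
rewrite inE => /andP[qp /asboolP qc]; split=> //.
by rewrite subr_eq0; apply: contra qp => /eqP /pt_inj ->.
Qed.

Lemma detour_shorter p c r q : r \in N p c -> q \in Spc c p :\: N p c ->
  dist r q <= dist p q - (cos theta - sin theta) * dist p r.
Proof.
move=> rN qSN; have := N_near rN qSN; rewrite !edistE => near.
move: qSN; rewrite inE => /andP[_ /Spc_cone[q0 qc]].
have [r0 rc] := Spc_cone (fintype.subsetP (N_sub p c) r rN).
have cos_le := cos_le_dotv (quarter_pi_in_0pi theta_gt0 theta_lt) q0 r0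
  (cone_narrow qc rc q0 r0).
have := enorm_sub_narrow theta_gt0 theta_lt cos_le near.
by rewrite opprB addrA subrK.
Qed.

Section Faults.
Variable F : rel 'I_n.
Hypothesis F_sym : symmetric F.
Hypothesis F_deg : forall i, (#|[set j | F i j]| <= f)%N.

Lemma unfaulty_neighbour p c q : q \in Spc c p :\: N p c ->
  exists2 r, r \in N p c & ~~ F p r && ~~ F r q.
Proof.
move=> qSN; move: (qSN); rewrite inE => /andP[qNN qS].
have card_Npc : #|N p c| = (2 * f + 1)%N.
  have : (#|N p c| < #|Spc c p|)%N.
    by apply: proper_card; apply/properP; split; [exact: N_sub | exists q].
  by rewrite card_N; lia.
set A := [set j | F p j] :|: [set j | F q j].
have : (0 < #|N p c :\: A|)%N.
  have : (#|N p c :&: A| <= f + f)%N.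
    apply: leq_trans (subset_leq_card (subsetIr _ _)) _.
    exact: leq_trans (leq_card_setU _ _).1 (leq_add (F_deg p) (F_deg q)).
  by rewrite cardsD card_Npc; lia.
case/card_gt0P => r; rewrite !inE negb_or => /andP[/andP[Fpr Fqr] rN].
by exists r; rewrite // Fpr F_sym Fqr.
Qed.

Lemma walk_within_unfaulty t : 1 <= t * (cos theta - sin theta) ->
  forall p q, p != q -> ~~ F p q -> walk_within pt (GminusF G F) p q (t * dist p q).
Proof.
move=> t_stretch.
have /andP[sin_gt0 sin_lt_cos] := sin_lt_cos_quarter_pi theta_gt0 theta_lt.
have t_ge1 : 1 <= t by have := cos_le1 theta; nra.
pose shorter p q := [set e : 'I_n * 'I_n | dist e.1 e.2 < dist p q].
suff IH k p q : (#|shorter p q| < k)%N -> p != q -> ~~ F p q ->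
    walk_within pt (GminusF G F) p q (t * dist p q).
  by move=> p q; apply: IH.
elim: k p q => [//|k IH] p q short_k pq Fpq.
have [c qc] := cone_cover (pt q - pt p).
have qS : q \in Spc c p by rewrite inE eq_sym pq; apply/asboolP.
have edge r : r \in N p c -> ~~ F p r -> walk_within pt (GminusF G F) p r (dist p r).
  move=> rN Fpr; apply: walk_within_edge.
  by rewrite /GminusF G_N Fpr andbT; apply/existsP; exists c; rewrite rN.
have [qN|qNN] := boolP (q \in N p c).
  exact: walk_within_le (edge q qN Fpq) (ler_peMl (edist_ge0 _ _ _) t_ge1).
have qSN : q \in Spc c p :\: N p c by rewrite inE qNN.
have [r rN /andP[Fpr Frq]] := unfaulty_neighbour qSN.
have detour := detour_shorter rN qSN.
have pr_gt0 : 0 < dist p r.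
  by have [r0 _] := Spc_cone (fintype.subsetP (N_sub p c) r rN); rewrite edistE enorm_gt0.
have rq_lt : dist r q < dist p q.
  have : 0 < (cos theta - sin theta) * dist p r by rewrite mulr_gt0 ?subr_gt0.
  lra.
have rq : r != q by apply: contraNneq qNN => <-.
have short_rq : (#|shorter r q| < k)%N.
  rewrite -ltnS; apply: leq_trans short_k; apply: proper_card; apply/properP; split.
    by apply/fintype.subsetP => e; rewrite !inE => /lt_trans; apply.
  by exists (r, q); rewrite !inE /= ?rq_lt ?ltxx.
apply: walk_within_le (walk_within_cat (edge r rN Fpr) (IH r q short_rq rq Frq)) _.
have := edist_ge0 pt r q; nra.
Qed.

End Faults.

Lemma selection_faulty_degree_spanner t : 1 <= t * (cos theta - sin theta) ->
  faulty_degree_spanner pt f t G.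
Proof.
move=> t_stretch F F_sym _ F_deg i j.
have F_deg' i' : (#|[set j' | F i' j']| <= f)%N.
  apply: leq_trans (F_deg i'); apply/eq_leq/eq_card => j'; rewrite inE.
  by apply/idP/idP => [|/set_mem //]; exact: mem_set.
have walk_K s i' : path (KminusF F) i' s ->
    walk_within pt (GminusF G F) i' (last i' s) (t * walk_len pt i' s).
  elim: s i' => [|x s IH] i' /=.
    by rewrite walk_len_nil mulr0 => _; exact: walk_within_refl.
  rewrite /KminusF => /andP[/andP[ix Fix] xs]; rewrite walk_len_cons mulrDr.
  exact: walk_within_cat (walk_within_unfaulty F_sym F_deg' t_stretch ix Fix) (IH x xs).
have t_gt0 : 0 < t.
  have /andP[sin_gt0 sin_lt_cos] := sin_lt_cos_quarter_pi theta_gt0 theta_lt; nra.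
rewrite -lee_pdivrMl //; apply: le_ereal_inf_tmp => _ [s /andP[Ks /eqP <-] <-].
by rewrite lee_pdivrMl // -EFinM; apply: spdist_le_walk_within; exact: walk_K.
Qed.

End FaultTolerance.

Lemma card_bigcup_le (T I : finType) (A : I -> {set T}) :
  (#|\bigcup_(x : I) A x| <= \sum_(x : I) #|A x|)%N.
Proof.
elim/big_rec2: _ => [|x s U _ IH]; first by rewrite cards0.
by apply: leq_trans (leq_card_setU _ _).1 _; rewrite leq_add2l.
Qed.

Lemma nedges_le_selection n m k (G : rel 'I_n) (N : 'I_n -> 'I_m -> {set 'I_n}) :
  (forall i c, #|N i c| <= k)%N ->
  (forall i j, G i j = [exists c, (j \in N i c) || (i \in N j c)]) ->
  (nedges G <= 2 * (n * m * k))%N.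
Proof.
move=> card_N G_N.
pose U := \bigcup_(x : 'I_n * 'I_m) [set (x.1, j) | j in N x.1 x.2].
have card_U : (#|U| <= n * m * k)%N.
  apply: leq_trans (card_bigcup_le _) _.
  have : (\sum_(x : 'I_n * 'I_m) #|[set (x.1, j) | j in N x.1 x.2]| <=
           \sum_(x : 'I_n * 'I_m) k)%N.
    by apply: leq_sum => x _; apply: leq_trans (leq_imset_card _ _) (card_N _ _).
  by rewrite sum_nat_const card_prod !card_ord.
have sub : [set e : 'I_n * 'I_n | (e.1 < e.2)%N && G e.1 e.2]
    \subset U :|: [set (e.2, e.1) | e in U].
  apply/fintype.subsetP => -[a b]; rewrite !inE /= G_N => /andP[_ /existsP[c /orP[ab|ba]]].
    by apply/orP; left; apply/bigcupP; exists (a, c) => //; apply/imsetP; exists b.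
  apply/orP; right; apply/imsetP; exists (b, a) => //.
  by apply/bigcupP; exists (b, c) => //; apply/imsetP; exists a.
have -> : nedges G = #|[set e : 'I_n * 'I_n | (e.1 < e.2)%N && G e.1 e.2]|.
  apply: eq_card => e; rewrite inE; apply/idP/idP => [/set_mem //|]; exact: mem_set.
apply: leq_trans (subset_leq_card sub) _; apply: leq_trans (leq_card_setU _ _).1 _.
by rewrite mul2n -addnn leq_add // (leq_trans (leq_imset_card _ _)).
Qed.

Unset Implicit Arguments. Set Strict Implicit.

Theorem theorem4 (R : realType) (d : nat) (eps theta K : R) :
  0 < eps -> 0 < theta -> theta < pi / 4 ->
  1 / (cos theta - sin theta) <= 1 + eps ->
  exists cst : R,
  forall (n : nat) (pt : 'I_n -> 'rV[R]_d) (m : nat)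
         (cone : 'I_m -> classical_sets.set 'rV[R]_d) (ray : 'I_m -> 'rV[R]_d)
         (f : nat) (G : rel 'I_n),
    injective pt ->
    cone_collection theta cone ray ->
    m%:R <= K / theta ^+ d.-1 ->
    is_Yao pt cone (2 * f + 1) G \/ is_Theta pt cone ray (2 * f + 1) G ->
    faulty_degree_spanner pt f (1 + eps) G /\
    (nedges G)%:R <= cst * (f.+1)%:R * n%:R.
Proof.
move=> eps_gt0 theta_gt0 theta_lt stretch; exists (4 * (K / theta ^+ d.-1)).
move=> n pt m cone ray f G pt_inj [_ [narrow [cover ray_in]]] m_le selection.
have /andP[_ sin_lt_cos] := sin_lt_cos_quarter_pi theta_gt0 theta_lt.
have t_stretch : 1 <= (1 + eps) * (cos theta - sin theta).
  by rewrite -ler_pdivrMr ?subr_gt0.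
have edges (N : 'I_n -> 'I_m -> {set 'I_n}) :
    (forall i c, #|N i c| = minn (2 * f + 1) #|Spc pt (cone c) i|) ->
    (forall i j, G i j = [exists c, (j \in N i c) || (i \in N j c)]) ->
    (nedges G)%:R <= 4 * (K / theta ^+ d.-1) * (f.+1)%:R * n%:R.
  move=> card_N G_N; apply: le_trans (_ : (4 * m * f.+1 * n)%N%:R <= _).
    rewrite ler_nat; apply: leq_trans (nedges_le_selection (k := (2 * f + 1)%N) _ G_N) _.
      by move=> i c; rewrite card_N geq_minl.
    lia.
  by rewrite !natrM; do 2 apply: ler_wpM2r => //; apply: ler_wpM2l.
case: selection => -[N [N_sub [card_N [N_order G_N]]]]; split; try exact: edges card_N G_N;
  apply: (selection_faulty_degree_spanner pt_inj theta_gt0 theta_lt narrow cover N_sub card_N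
    _ G_N t_stretch) => p c r q rN qSN.
- exact: le_trans (ler_piMr (edist_ge0 _ _ _) (cos_le1 _)) (N_order _ _ _ _ rN qSN).
- have [r0 rc] := Spc_cone pt_inj (fintype.subsetP (N_sub p c) r rN).
  have [ray0 ray_cone] := ray_in c.
  have ray_c : cone c (ray c) by rewrite -[ray c]scale1r; apply: ray_cone.
  apply: le_trans (projdist_le_edist _ _ _ ray0).
  apply: le_trans (N_order _ _ _ _ rN qSN).
  exact: edist_cos_le_projdist (quarter_pi_in_0pi theta_gt0 theta_lt) ray0 r0
    (narrow _ _ _ rc ray_c r0 ray0).
Qed.
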